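(* Let $R$ be a multiplicative hyperring as in the context and let $I$ be a 1-absorbing prime hyperideal of $R$. Then $\sqrt{I}$ is a prime hyperideal of $R$. Moreover, for every nonunit element $z\in R\setminus I$, the set $(I:z)$ is a prime hyperideal of $R$.
   Context: Throughout, $R$ is a commutative multiplicative hyperring: $(R,+)$ is an abelian group and $\circ:R\times R\to P^*(R)$ (nonempty subsets of $R$) is a commutative, associative hyperoperation with $a\circ(b+c)\subseteq a\circ b+a\circ c$ and $a\circ(-b)=(-a)\circ b=-(a\circ b)$ for all $a,b,c$. For nonempty $A,B\subseteq R$, $A\circ B=\bigcup_{a\in A,b\in B}a\circ b$. $R$ has an identity $1$ (i.e. $a\in a\circ 1$ for all $a$); $x$ is a unit if $1\in x\circ y$ for some $y\in R$. A hyperideal is a nonempty $I\subseteq R$ with $a-b\in I$ and $r\circ a\subseteq I$ for all $a,b\in I$, $r\in R$. All hyperideals are assumed to be $\mathbf{C}$-hyperideals: for every finite product $A=r_1\circ\cdots\circ r_n$, $A\cap I\neq\emptyset$ implies $A\subseteq I$. A prime hyperideal is a proper hyperideal $P$ such that $x\circ y\subseteq P$ implies $x\in P$ or $y\in P$. $\sqrt{I}$ is the intersection of all prime hyperideals containing $I$ (and $R$ if there are none); under the $\mathbf{C}$-hyperideal assumption, $\sqrt{I}=\{r\in R: r^n\subseteq I \text{ for some } n\in\mathbb{N}\}$. For $a\in R$, $(I:a)=\{r\in R: r\circ a\subseteq I\}$. A proper hyperideal $I$ is 1-absorbing prime if for all nonunit $x,y,z\in R$, $x\circ y\circ z\subseteq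 I$ implies $x\circ y\subseteq I$ or $z\in I$. *)

From mathcomp Require Import all_boot all_algebra.
Set Implicit Arguments. Unset Strict Implicit. Unset Printing Implicit Defensive.
Import GRing.Theory.
Local Open Scope ring_scope.

Definition hsubset (T : Type) (A B : T -> Prop) : Prop := forall x, A x -> B x.

Section Hyperring.
Variable R : zmodType.
Variable hm : R -> R -> R -> Prop. (* hm a b = a o b, a subset of R *)

Definition hsetmul (A B : R -> Prop) : R -> Prop :=
  fun x => exists a b, A a /\ B b /\ hm a b x.
Definition hsingle (a : R) : R -> Prop := fun x => x = a.
Definition hsetadd (A B : R -> Prop) : R -> Prop :=
  fun x => exists a b, A a /\ B b /\ x = a + b.
Definition hsetopp (A : R -> Prop) : R -> Prop := fun x => A (- x).

Definition hprod (r : R) (rs : seq R) : R -> Prop :=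
  foldl (fun A x => hsetmul A (hsingle x)) (hsingle r) rs.

Record mult_hyperring (one : R) : Prop := MultHyperring {
  hm_nonempty : forall a b, exists x, hm a b x;
  hm_comm : forall a b x, hm a b x <-> hm b a x;
  hm_assoc : forall a b c x,
    hsetmul (hm a b) (hsingle c) x <-> hsetmul (hsingle a) (hm b c) x;
  hm_distr : forall a b c, hsubset (hm a (b + c)) (hsetadd (hm a b) (hm a c));
  hm_oppr : forall a b x, hm a (- b) x <-> hsetopp (hm a b) x;
  hm_oppl : forall a b x, hm (- a) b x <-> hsetopp (hm a b) x;
  hm_one : forall a, hm a one a
}.

Definition hunit (one x : R) : Prop := exists y, hm x y one.

(* Hyperideals; following the paper's standing convention, every
   hyperideal is a C-hyperideal. *)
Definition C_cond (I : R -> Prop) : Prop :=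
  forall r rs, (exists x, hprod r rs x /\ I x) -> hsubset (hprod r rs) I.

Definition hyperideal (I : R -> Prop) : Prop :=
  [/\ exists a, I a,
      (forall a b, I a -> I b -> I (a - b)),
      (forall r a, I a -> hsubset (hm r a) I)
    & C_cond I].

Definition proper (I : R -> Prop) : Prop := exists x, ~ I x.

Definition prime_hyperideal (P : R -> Prop) : Prop :=
  [/\ hyperideal P, proper P &
      forall x y, hsubset (hm x y) P -> P x \/ P y].

(* sqrt I = intersection of all prime hyperideals containing I
   (= R when there are none) *)
Definition hradical (I : R -> Prop) : R -> Prop :=
  fun r => forall P, prime_hyperideal P -> hsubset I P -> P r.

Definition hcolon (I : R -> Prop) (a : R) : R -> Prop :=
  fun r => hsubset (hm r a) I.

Definition one_absorbing_prime (one : R) (I : R -> Prop) : Prop :=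
  [/\ hyperideal I, proper I &
      forall x y z, ~ hunit one x -> ~ hunit one y -> ~ hunit one z ->
        hsubset (hprod x [:: y; z]) I ->
        hsubset (hm x y) I \/ I z].

End Hyperring.

From Stdlib Require Import Classical FunctionalExtensionality PropExtensionality.
From Pilot Require Import Defs.
From mathcomp Require Import all_boot all_algebra.
Set Implicit Arguments. Unset Strict Implicit.
Import GRing.Theory.
Local Open Scope ring_scope.

(* For any hyperideal I and any z, (I : z) is a hyperideal
   (the C-condition is inherited from that of I by appending z to a
   product); it is proper when z is not in I.  If moreover I is 1-absorbing
   prime and z is a nonunit outside I, then x o y <= (I : z) gives
   x o z o y <= I; a unit factor can be cancelled, and otherwise the
   1-absorbing property yields x o z <= I or y in I.

   If I is prime then sqrt I = I.  Otherwise pick a, b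
   outside I with a o b <= I.  Both are nonunits, and two applications of
   the 1-absorbing property show x o y <= I for all nonunits x, y.  Then
   sqrt I = (I : a): elements of (I : a) are nonunits, so r o r <= I and r
   lies in every prime containing I; conversely (I : a) is itself a prime
   containing I.  In both cases sqrt I is prime. *)

Lemma hset_ext (T : Type) (P Q : T -> Prop) :
  (forall r, P r <-> Q r) -> P = Q.
Proof.
move=> PQ; apply: functional_extensionality => r.
exact: propositional_extensionality.
Qed.

Section Hyperring.
Variables (R : zmodType) (hm : R -> R -> R -> Prop) (one : R).
Hypothesis HR : mult_hyperring hm one.

Definition hmul3 (x y z q : R) : Prop := exists v, hm x y v /\ hm v z q.

Lemma hprod2 x y z q : hprod hm x [:: y; z] q <-> hmul3 x y z q.
Proof.
split.
- by move=> [a [b [[a' [b' [-> [-> xya]]]] [-> azq]]]]; exists a.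
- by move=> [v [xyv vzq]]; exists v, z; split=> //; exists x, y.
Qed.

Lemma hmul3_assoc x y z q :
  hmul3 x y z q <-> exists w, hm y z w /\ hm x w q.
Proof.
split.
- move=> [v [xyv vzq]].
  have : hsetmul hm (hm x y) (hsingle z) q by exists v, z.
  by move/(hm_assoc HR) => [_ [w [-> [yzw xwq]]]]; exists w.
- move=> [w [yzw xwq]].
  have : hsetmul hm (hsingle x) (hm y z) q by exists x, w.
  by move/(hm_assoc HR) => [v [_ [xyv [-> vzq]]]]; exists v.
Qed.

Lemma hmul3_swap12 x y z q : hmul3 x y z q -> hmul3 y x z q.
Proof. by move=> [v [xyv vzq]]; exists v; split=> //; apply/(hm_comm HR). Qed.

Lemma hmul3_swap23 x y z q : hmul3 x y z q -> hmul3 x z y q.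
Proof.
move/hmul3_assoc => [w [yzw xwq]]; apply/hmul3_assoc.
by exists w; split=> //; apply/(hm_comm HR).
Qed.

Section Hyperideal.
Variable I : R -> Prop.
Hypothesis HI : hyperideal hm I.

Lemma hyperideal_absorb a r q : I a -> hm a r q -> I q.
Proof. by case: HI => _ _ absorb _ Ia arq; apply: (absorb r a Ia); apply/(hm_comm HR). Qed.

Lemma unit_cancel u y : hunit hm one u -> hsubset (hm u y) I -> I y.
Proof.
move=> [v uv1] uyI.
have : hsetmul hm (hsingle y) (hm u v) y.
  by exists y, one; split=> //; split; [exact: uv1 | exact: (hm_one HR y)].
move/(hm_assoc HR) => [p [_ [yup [-> pvy]]]].
by apply: (hyperideal_absorb (r := v) _ pvy); apply: uyI; apply/(hm_comm HR).
Qed.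

Lemma unit_cancel3 u y z :
  hunit hm one u -> hsubset (hmul3 u y z) I -> hsubset (hm y z) I.
Proof.
move=> Uu uyzI w yzw; apply: (unit_cancel Uu) => q uwq.
by apply: uyzI; apply/hmul3_assoc; exists w.
Qed.

Lemma colon_hyperideal z : hyperideal hm (hcolon hm I z).
Proof.
have [[a0 Ia0] Isub Iabs IC] := HI.
split.
- by exists a0 => q a0zq; apply: hyperideal_absorb Ia0 a0zq.
- move=> a b azI bzI q /(hm_comm HR) /(hm_distr HR) [s [t [zas [zbt ->]]]].
  have Is : I s by apply: azI; apply/(hm_comm HR).
  have It : I (- t).
    by apply: bzI; apply/(hm_comm HR); apply: (proj1 (hm_oppr HR z b t)).
  by have := Isub _ _ Is It; rewrite opprK.
- move=> r a azI x rax q xzq.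
  have : hmul3 r a z q by exists x.
  by move/hmul3_assoc => [w [azw rwq]]; apply: (Iabs r w (azI w azw)).
- move=> r rs [x [rsx xzI]] y rsy q yzq.
  have [w xzw] := hm_nonempty HR x z.
  have := IC r (rcons rs z); rewrite /hprod foldl_rcons; apply.
    by exists w; split; [exists x, z | exact: xzI].
  by exists y, z.
Qed.

Lemma colon_proper z : ~ I z -> Defs.proper (hcolon hm I z).
Proof. by move=> Iz; exists one => oneI; apply: Iz; apply: oneI; apply/(hm_comm HR); exact: (hm_one HR _). Qed.

Lemma hyperideal_sub_colon z : hsubset I (hcolon hm I z).
Proof. by move=> x Ix q xzq; apply: hyperideal_absorb Ix xzq. Qed.

End Hyperideal.

Lemma radical_prime P : prime_hyperideal hm P -> hradical hm P = P.
Proof.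
move=> Pprime; apply: hset_ext => r; split; first by apply.
by move=> Pr Q _; apply.
Qed.

Section OneAbsorbing.
Variable I : R -> Prop.
Hypothesis HI : one_absorbing_prime hm one I.

Let HId : hyperideal hm I. Proof. by have [] := HI. Qed.

Lemma colon_prime z :
  ~ hunit hm one z -> ~ I z -> prime_hyperideal hm (hcolon hm I z).
Proof.
move=> Uz Iz; have [_ _ Iabs1] := HI.
split; [exact: (colon_hyperideal HId) | exact: (colon_proper Iz) |].
move=> x y xyI.
have xyzI : hsubset (hmul3 x y z) I by move=> q [v [xyv vzq]]; apply: xyI xyv q vzq.
have [Ux | Ux] := classic (hunit hm one x).
  by right; move=> q; apply: (unit_cancel3 HId Ux xyzI).
have [Uy | Uy] := classic (hunit hm one y).
  by left; move=> q; apply: (unit_cancel3 HId Uy) => w /hmul3_swap12; apply: xyzI.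
have : hsubset (hprod hm x [:: z; y]) I.
  by move=> q /hprod2 /hmul3_swap23; apply: xyzI.
case/(Iabs1 _ _ _ Ux Uz Uy) => [xzI | Iy]; first by left.
by right=> q; apply: (hyperideal_sub_colon HId Iy).
Qed.

Lemma nonprime_nonunits_mul :
  ~ (forall x y, hsubset (hm x y) I -> I x \/ I y) ->
  exists a, [/\ ~ hunit hm one a, ~ I a &
    forall x y, ~ hunit hm one x -> ~ hunit hm one y -> hsubset (hm x y) I].
Proof.
move=> Inotprime; have [_ _ Iabs1] := HI.
have [a [b [abI [Ia Ib]]]] : exists a b, hsubset (hm a b) I /\ ~ I a /\ ~ I b.
  apply: NNPP => none; apply: Inotprime => x y xyI.
  have [Ix | Ix] := classic (I x); first by left.
  have [Iy | Iy] := classic (I y); first by right.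
  by case: none; exists x, y.
have Ua : ~ hunit hm one a by move=> U; apply: Ib; exact: (unit_cancel HId U abI).
have Ub : ~ hunit hm one b.
  by move=> U; apply: Ia; apply: (unit_cancel HId U) => q /(hm_comm HR); apply: abI.
(* x o a o b <= I with b outside I forces x o a <= I ... *)
have xaI x : ~ hunit hm one x -> hsubset (hm x a) I.
  move=> Ux; have : hsubset (hprod hm x [:: a; b]) I.
    move=> q /hprod2 /hmul3_assoc [w [abw xwq]].
    by apply: (hyperideal_absorb HId (r := x) (abI w abw)); apply/(hm_comm HR).
  by case/(Iabs1 _ _ _ Ux Ua Ub).
(* ... and then x o y o a <= I with a outside I forces x o y <= I. *)
exists a; split=> // x y Ux Uy.
have : hsubset (hprod hm x [:: y; a]) I.
  move=> q /hprod2 /hmul3_assoc [w [yaw xwq]].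
  by apply: (hyperideal_absorb HId (r := x) (xaI y Uy w yaw)); apply/(hm_comm HR).
by case/(Iabs1 _ _ _ Ux Uy Ua).
Qed.

Lemma radical_eq_colon a :
  ~ hunit hm one a -> ~ I a ->
  (forall x y, ~ hunit hm one x -> ~ hunit hm one y -> hsubset (hm x y) I) ->
  hradical hm I = hcolon hm I a.
Proof.
move=> Ua Ia nonunitsI; apply: hset_ext => r; split.
  by apply; [exact: colon_prime | exact: hyperideal_sub_colon].
move=> raI P [_ _ Pprime] IP.
have Ur : ~ hunit hm one r by move=> U; apply: Ia; exact: (unit_cancel HId U raI).
by case: (Pprime r r) => // q rrq; apply: IP; apply: nonunitsI rrq.
Qed.

Lemma radical_one_absorbing_prime : prime_hyperideal hm (hradical hm I).
Proof.
have [Iprime | Inotprime] := classic (forall x y, hsubset (hm x y) I -> I x \/ I y).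
  have [_ Iproper _] := HI.
  by rewrite radical_prime; split.
have [a [Ua Ia nonunitsI]] := nonprime_nonunits_mul Inotprime.
by rewrite (radical_eq_colon Ua Ia nonunitsI); apply: colon_prime.
Qed.

End OneAbsorbing.
End Hyperring.

Theorem mainTheorem1 (R : zmodType) (hm : R -> R -> R -> Prop) (one : R)
  (HR : mult_hyperring hm one) (I : R -> Prop)
  (HI : one_absorbing_prime hm one I) :
  prime_hyperideal hm (hradical hm I) /\
  (forall z : R, ~ hunit hm one z -> ~ I z ->
     prime_hyperideal hm (hcolon hm I z)).
Proof.
split; first exact: (radical_one_absorbing_prime HR HI).
by move=> z; apply: (colon_prime HR HI).
Qed.
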